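(* Let $\mathcal{C}$ be a monoidal C*-category and let $\perp$ be a symmetric binary relation on the set of objects of $\mathcal{C}$ such that: (1) if $\rho_1\perp\rho_2$ then $\rho_1\rho_2=\rho_2\rho_1$; (2) if $t_j:\sigma_j\to\tau_j$ ($j=1,2$) with $\sigma_1\perp\sigma_2$ and $\tau_1\perp\tau_2$, then $t_1\otimes t_2=t_2\otimes t_1$; (3) there exist two full monoidal C*-subcategories $\mathcal{C}_1,\mathcal{C}_2\subset\mathcal{C}$, each equivalent to $\mathcal{C}$, with $\rho_1\perp\rho_2$ for all objects $\rho_1\in\mathcal{C}_1$, $\rho_2\in\mathcal{C}_2$. Then $\mathcal{C}$ possesses a unique symmetry $\epsilon$ satisfying $\epsilon(\rho_1,\rho_2)=\mathbf{1}_{\rho_1\rho_2}$ whenever $\rho_1\perp\rho_2$.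
   Context: A monoidal C*-category: a C*-category (complex Banach morphism spaces $I(\sigma,\tau)$, bilinear composition with $\|s\circ t\|\le\|s\|\|t\|$, antilinear involution $*$ with $(s\circ t)^*=t^*\circ s^*$ and $\|t^*t\|=\|t\|^2$) with associative products $\sigma\tau$ on objects and $\otimes$ on morphisms, $t_1\otimes t_2:\sigma_1\sigma_2\to\tau_1\tau_2$, $\mathbf{1}_{\rho_1}\otimes\mathbf{1}_{\rho_2}=\mathbf{1}_{\rho_1\rho_2}$, $(s_1\circ t_1)\otimes(s_2\circ t_2)=(s_1\otimes s_2)\circ(t_1\otimes t_2)$, a unit object $\iota$ neutral for the object product with $\mathbf{1}_\iota$ neutral for $\otimes$, $\otimes$ bilinear and $(t_1\otimes t_2)^*=t_1^*\otimes t_2^*$. A full monoidal C*-subcategory is a full subcategory containing $\iota$ and closed under the object product; it is equivalent to $\mathcal{C}$ if every object of $\mathcal{C}$ is unitarily equivalent (isomorphic via a unitary morphism) to an object of the subcategory. A symmetry is a family of unitaries $\epsilon(\sigma,\tau):\sigma\tau\to\tau\sigma$ with $\epsilon(\sigma,\tau)^*=\epsilon(\tau,\sigma)$, $\epsilon(\iota,\rho)=\epsilon(\rho,\iota)=\mathbf{1}_\rho$, $\epsilon(\sigma\rho,\tau)=(\epsilon(\sigma,\tau)\otimes\mathbf{1}_\rho)\circ(\mathbf{1}_\sigma\otimes\epsilon(\rho,\tau))$, and $\epsilon(\tau_1,\tau_2)\circ(t_1\otimes t_2)=(t_2\otimes t_1)\circ\epsilon(\sigma_1,\sigma_2)$ for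 all $t_j:\sigma_j\to\tau_j$. *)

From HB Require Import structures.
From mathcomp Require Import all_boot all_order all_algebra.
From mathcomp Require Import complex.
From mathcomp Require Import all_classical all_reals all_analysis.
Set Implicit Arguments. Unset Strict Implicit. Unset Printing Implicit Defensive.
Import Order.TTheory GRing.Theory Num.Theory.
Local Open Scope ring_scope.

(* Heterogeneous equality of morphisms living in possibly different
   (but, as a consequence, propositionally equal) hom-spaces. *)
Definition HomEq (Ob : Type) (H : Ob -> Ob -> Type) (a b a' b' : Ob)
  (f : H a b) (g : H a' b') : Prop :=
  existT (fun p : Ob * Ob => H p.1 p.2) (a, b) f =
  existT (fun p : Ob * Ob => H p.1 p.2) (a', b') g.
Arguments HomEq {Ob} H {a b a' b'} f g.

(* A (strict) monoidal C*-category over the complex numbers R[i]: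
   every hom-space is a complex Banach space. *)
Record MonCstarCat (R : realType) := {
  Ob : Type;
  hom : Ob -> Ob -> completeNormedModType R[i];
  hcomp : forall a b c, hom b c -> hom a b -> hom a c;
  idm : forall a, hom a a;
  star : forall a b, hom a b -> hom b a;
  omul : Ob -> Ob -> Ob;
  ounit : Ob;
  tens : forall a1 a2 b1 b2, hom a1 b1 -> hom a2 b2 -> hom (omul a1 a2) (omul b1 b2);
  compA : forall a b c d (h : hom c d) (g : hom b c) (f : hom a b),
      hcomp h (hcomp g f) = hcomp (hcomp h g) f;
  comp1m : forall a b (f : hom a b), hcomp (idm b) f = f;
  compm1 : forall a b (f : hom a b), hcomp f (idm a) = f;
  compDl : forall a b c (g1 g2 : hom b c) (f : hom a b),
      hcomp (g1 + g2) f = hcomp g1 f + hcomp g2 f;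
  compDr : forall a b c (g : hom b c) (f1 f2 : hom a b),
      hcomp g (f1 + f2) = hcomp g f1 + hcomp g f2;
  compZl : forall a b c (k : R[i]) (g : hom b c) (f : hom a b),
      hcomp (k *: g) f = k *: hcomp g f;
  compZr : forall a b c (k : R[i]) (g : hom b c) (f : hom a b),
      hcomp g (k *: f) = k *: hcomp g f;
  hcomp_norm : forall a b c (g : hom b c) (f : hom a b),
      `|hcomp g f| <= `|g| * `|f|;
  starD : forall a b (f g : hom a b), star (f + g) = star f + star g;
  starZ : forall a b (k : R[i]) (f : hom a b), star (k *: f) = k^* *: star f;
  starK : forall a b (f : hom a b), star (star f) = f;
  star_comp : forall a b c (g : hom b c) (f : hom a b),
      star (hcomp g f) = hcomp (star f) (star g);
  cstar : forall a b (f : hom a b), `|hcomp (star f) f| = `|f| ^+ 2;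
  omulA : forall a b c, omul a (omul b c) = omul (omul a b) c;
  omul1x : forall a, omul ounit a = a;
  omulx1 : forall a, omul a ounit = a;
  tens_id : forall a b, tens (idm a) (idm b) = idm (omul a b);
  tens_comp : forall a1 a2 b1 b2 c1 c2 (s1 : hom b1 c1) (t1 : hom a1 b1)
      (s2 : hom b2 c2) (t2 : hom a2 b2),
      tens (hcomp s1 t1) (hcomp s2 t2) = hcomp (tens s1 s2) (tens t1 t2);
  tensA : forall a1 a2 a3 b1 b2 b3 (t1 : hom a1 b1) (t2 : hom a2 b2)
      (t3 : hom a3 b3),
      HomEq hom (tens t1 (tens t2 t3)) (tens (tens t1 t2) t3);
  tens1x : forall a b (t : hom a b), HomEq hom (tens (idm ounit) t) t;
  tensx1 : forall a b (t : hom a b), HomEq hom (tens t (idm ounit)) t;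
  tensDl : forall a1 a2 b1 b2 (f g : hom a1 b1) (h : hom a2 b2),
      tens (f + g) h = tens f h + tens g h;
  tensDr : forall a1 a2 b1 b2 (h : hom a1 b1) (f g : hom a2 b2),
      tens h (f + g) = tens h f + tens h g;
  tensZl : forall a1 a2 b1 b2 (k : R[i]) (f : hom a1 b1) (h : hom a2 b2),
      tens (k *: f) h = k *: tens f h;
  tensZr : forall a1 a2 b1 b2 (k : R[i]) (h : hom a1 b1) (f : hom a2 b2),
      tens h (k *: f) = k *: tens h f;
  star_tens : forall a1 a2 b1 b2 (f : hom a1 b1) (g : hom a2 b2),
      star (tens f g) = tens (star f) (star g)
}.

Arguments hcomp {R} m {a b c}.
Arguments idm {R} m a.
Arguments star {R} m {a b}.
Arguments omul {R} m.
Arguments ounit {R} m.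
Arguments tens {R} m {a1 a2 b1 b2}.
Arguments hom {R} m.
Arguments Ob {R} m.

Section Defs.
Variables (R : realType) (C : MonCstarCat R).

Definition unitary (a b : Ob C) (u : hom C a b) : Prop :=
  hcomp C (star C u) u = idm C a /\ hcomp C u (star C u) = idm C b.

(* the identity of (a b) c, viewed as a morphism a (b c) -> (a b) c *)
Definition assocU (a b c : Ob C) : hom C (omul C a (omul C b c)) (omul C (omul C a b) c) :=
  eq_rect_r (fun x => hom C x (omul C (omul C a b) c))
            (idm C (omul C (omul C a b) c)) (@omulA _ C a b c).

(* full monoidal C*-subcategory, given by its (predicate of) objects *)
Definition full_monoidal_sub (P : Ob C -> Prop) : Prop :=
  P (ounit C) /\ (forall a b, P a -> P b -> P (omul C a b)).

Definition equivalent_to_C (P : Ob C -> Prop) : Prop :=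
  forall a, exists b (u : hom C a b), P b /\ unitary u.

Definition is_symmetry (eps : forall a b, hom C (omul C a b) (omul C b a)) : Prop :=
  (forall a b, unitary (eps a b)) /\
  (forall a b, star C (eps a b) = eps b a) /\
  (forall r, HomEq (hom C) (eps (ounit C) r) (idm C r)) /\
  (forall r, HomEq (hom C) (eps r (ounit C)) (idm C r)) /\
  (forall s r t, HomEq (hom C) (eps (omul C s r) t)
       (hcomp C (tens C (eps s t) (idm C r))
          (hcomp C (assocU s t r) (tens C (idm C s) (eps r t))))) /\
  (forall s1 s2 t1 t2 (f1 : hom C s1 t1) (f2 : hom C s2 t2),
      hcomp C (eps t1 t2) (tens C f1 f2) = hcomp C (tens C f2 f1) (eps s1 s2)).

End Defs.

(* Choose unitaries u_a : a -> a1 into the first subcategory and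
   v_b : b -> b2 into the second.  Then a1 ⊥ b2, so a1 b2 = b2 a1, and one sets
     eps(a, b) := (v_b ⊗ u_a)^* ∘ (u_a ⊗ v_b) : ab -> ba.
   By condition (2), tensor products of morphisms between orthogonal pairs
   commute with the identifications a1 b2 = b2 a1, so this formula does not
   depend on the chosen unitaries, nor on the orthogonal pair they land in;
   each axiom of a symmetry then follows by choosing convenient unitaries.
   Conversely, naturality of any symmetry that is trivial on orthogonal pairs,
   applied to u_a ⊗ v_b, forces it to be given by the same formula. *)
From mathcomp Require Import all_boot boolp.
From Stdlib Require Import Eqdep.
From mathcomp Require Import reals normedtype.
Set Implicit Arguments. Unset Strict Implicit. Unset Printing Implicit Defensive.

Section CategoryFacts.
Variables (R : realType) (C : MonCstarCat R).
Local Notation O := (Ob C).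
Local Notation "g ⊚ f" := (hcomp C g f) (at level 40, left associativity).
Local Notation "f ⊗ g" := (tens C f g) (at level 35).
Local Notation I := (idm C).
Local Notation st := (star C).

Lemma compA_eq (a b c d e : O) (x : hom C c d) (y : hom C b c) (z : hom C e d)
    (w : hom C b e) (t : hom C a b) :
  x ⊚ y = z ⊚ w -> x ⊚ (y ⊚ t) = z ⊚ (w ⊚ t).
Proof. by move=> xy_zw; rewrite !compA xy_zw. Qed.

Lemma compA_eq1 (a b c d : O) (x : hom C c d) (y : hom C b c) (z : hom C b d)
    (t : hom C a b) :
  x ⊚ y = z -> x ⊚ (y ⊚ t) = z ⊚ t.
Proof. by move=> xy_z; rewrite compA xy_z. Qed.

Definition castm (a b : O) (e : a = b) : hom C a b :=
  match e in _ = y return hom C a y with erefl => I a end.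

Lemma castm_id (a : O) (e : a = a) : castm e = I a.
Proof. by rewrite (UIP _ _ _ e erefl). Qed.

Lemma castm_irr (a b : O) (e e' : a = b) : castm e = castm e'.
Proof. by rewrite (UIP _ _ _ e e'). Qed.

Lemma castm_comp (a b c : O) (e1 : a = b) (e2 : b = c) :
  castm e2 ⊚ castm e1 = castm (etrans e1 e2).
Proof. by case: c / e2; case: b / e1; rewrite /= comp1m. Qed.

Lemma castm_compr (a b c d : O) (e1 : a = b) (e2 : b = c) (t : hom C d a) :
  castm e2 ⊚ (castm e1 ⊚ t) = castm (etrans e1 e2) ⊚ t.
Proof. by rewrite compA castm_comp. Qed.

Lemma castmK (a b c : O) (e : a = b) (x : hom C a c) :
  x ⊚ castm (esym e) ⊚ castm e = x.
Proof. by rewrite -compA castm_comp castm_id compm1. Qed.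

Lemma star_idm (a : O) : st (I a) = I a.
Proof. by rewrite -[st (I a)]compm1 -{2}[I a]starK -star_comp compm1 starK. Qed.

Lemma star_castm (a b : O) (e : a = b) : st (castm e) = castm (esym e).
Proof. by case: b / e; rewrite /= star_idm. Qed.

Lemma tens_castm (a1 a2 b1 b2 : O) (e1 : a1 = b1) (e2 : a2 = b2) :
  castm e1 ⊗ castm e2 = castm (f_equal2 (omul C) e1 e2).
Proof. by case: _ / e1; case: _ / e2; rewrite tens_id castm_id. Qed.

Lemma tens_castm_idm (a b c : O) (e : a = b) :
  castm e ⊗ I c = castm (f_equal2 (omul C) e (erefl c)).
Proof. by rewrite -tens_castm (castm_id (erefl c)). Qed.

Lemma tens_idm_castm (a b c : O) (e : a = b) :
  I c ⊗ castm e = castm (f_equal2 (omul C) (erefl c) e).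
Proof. by rewrite -tens_castm (castm_id (erefl c)). Qed.

Lemma assocU_castm (a b c : O) : assocU a b c = castm (omulA a b c).
Proof. by rewrite /assocU; case: _ / (omulA a b c). Qed.

Lemma HomEqE (a b a' b' : O) (f : hom C a b) (g : hom C a' b')
    (e1 : a = a') (e2 : b = b') :
  HomEq (hom C) f g -> g = castm e2 ⊚ f ⊚ castm (esym e1).
Proof.
case: a' / e1 g; case: b' / e2 => g fg.
by rewrite /= comp1m compm1 (inj_pair2 _ _ _ _ _ fg).
Qed.

Lemma HomEq_castm (a b a' b' : O) (f : hom C a b) (g : hom C a' b')
    (e1 : a = a') (e2 : b = b') :
  g = castm e2 ⊚ f ⊚ castm (esym e1) -> HomEq (hom C) f g.
Proof. by case: a' / e1 g; case: b' / e2 => g; rewrite /= comp1m compm1 => ->. Qed.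

Lemma HomEq_sym (a b a' b' : O) (f : hom C a b) (g : hom C a' b') :
  HomEq (hom C) f g -> HomEq (hom C) g f.
Proof. exact: esym. Qed.

Lemma tensA_castm (a1 a2 a3 b1 b2 b3 : O)
    (f1 : hom C a1 b1) (f2 : hom C a2 b2) (f3 : hom C a3 b3) :
  (f1 ⊗ f2) ⊗ f3 = castm (omulA b1 b2 b3) ⊚ (f1 ⊗ (f2 ⊗ f3)) ⊚ castm (esym (omulA a1 a2 a3)).
Proof. exact: HomEqE (tensA f1 f2 f3). Qed.

Lemma tensA_castm_r (a1 a2 a3 b1 b2 b3 : O)
    (f1 : hom C a1 b1) (f2 : hom C a2 b2) (f3 : hom C a3 b3) :
  f1 ⊗ (f2 ⊗ f3) = castm (esym (omulA b1 b2 b3)) ⊚ ((f1 ⊗ f2) ⊗ f3) ⊚ castm (omulA a1 a2 a3).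
Proof.
rewrite (HomEqE (esym (omulA a1 a2 a3)) (esym (omulA b1 b2 b3)) (HomEq_sym (tensA f1 f2 f3))).
by rewrite (castm_irr (esym (esym _)) (omulA a1 a2 a3)).
Qed.

Lemma tens1x_castm (a b : O) (t : hom C a b) :
  I (ounit C) ⊗ t = castm (esym (omul1x b)) ⊚ t ⊚ castm (omul1x a).
Proof.
rewrite (HomEqE (esym (omul1x a)) (esym (omul1x b)) (HomEq_sym (tens1x t))).
by rewrite (castm_irr (esym (esym _)) (omul1x a)).
Qed.

Lemma tensx1_castm (a b : O) (t : hom C a b) :
  t ⊗ I (ounit C) = castm (esym (omulx1 b)) ⊚ t ⊚ castm (omulx1 a).
Proof.
rewrite (HomEqE (esym (omulx1 a)) (esym (omulx1 b)) (HomEq_sym (tensx1 t))).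
by rewrite (castm_irr (esym (esym _)) (omulx1 a)).
Qed.

Lemma unitary_idm (a : O) : unitary (I a).
Proof. by rewrite /unitary star_idm comp1m. Qed.

Lemma unitary_castm (a b : O) (e : a = b) : unitary (castm e).
Proof. by case: _ / e; exact: unitary_idm. Qed.

Lemma unitary_comp (a b c : O) (g : hom C b c) (f : hom C a b) :
  unitary g -> unitary f -> unitary (g ⊚ f).
Proof.
move=> [g1 g2] [f1 f2]; rewrite /unitary star_comp; split.
  by rewrite -compA (compA_eq1 _ g1) comp1m.
by rewrite -compA (compA_eq1 _ f2) comp1m.
Qed.

Lemma unitary_star (a b : O) (f : hom C a b) : unitary f -> unitary (st f).
Proof. by move=> [f1 f2]; rewrite /unitary starK. Qed.

Lemma unitary_tens (a1 a2 b1 b2 : O) (f : hom C a1 b1) (g : hom C a2 b2) :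
  unitary f -> unitary g -> unitary (f ⊗ g).
Proof.
by move=> [f1 f2] [g1 g2]; rewrite /unitary star_tens -!tens_comp f1 f2 g1 g2 !tens_id.
Qed.

End CategoryFacts.

Section PerpSwap.
Variables (R : realType) (C : MonCstarCat R) (perp : Ob C -> Ob C -> Prop).
Local Notation O := (Ob C).
Local Notation "g ⊚ f" := (hcomp C g f) (at level 40, left associativity).
Local Notation "f ⊗ g" := (tens C f g) (at level 35).
Local Notation I := (idm C).
Local Notation st := (star C).
Hypothesis perp_sym : forall a b, perp a b -> perp b a.
Hypothesis perp_comm : forall r1 r2, perp r1 r2 -> omul C r1 r2 = omul C r2 r1.
Hypothesis perp_tens : forall s1 s2 t1 t2 (f1 : hom C s1 t1) (f2 : hom C s2 t2),
  perp s1 s2 -> perp t1 t2 -> HomEq (hom C) (f1 ⊗ f2) (f2 ⊗ f1).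

Definition perp_swap (a b a' b' : O) (u : hom C a a') (v : hom C b b')
    (h : perp a' b') : hom C (omul C a b) (omul C b a) :=
  (st v ⊗ st u) ⊚ castm (perp_comm h) ⊚ (u ⊗ v).

Lemma perp_tens_castm (s1 s2 t1 t2 : O) (f1 : hom C s1 t1) (f2 : hom C s2 t2)
    (hs : perp s1 s2) (ht : perp t1 t2) :
  castm (perp_comm ht) ⊚ (f1 ⊗ f2) = (f2 ⊗ f1) ⊚ castm (perp_comm hs).
Proof. by rewrite (HomEqE (perp_comm hs) (perp_comm ht) (perp_tens f1 f2 hs ht)) castmK. Qed.

Lemma perp_swap_natural (s1 s2 t1 t2 x1 x2 y1 y2 : O)
    (f1 : hom C s1 t1) (f2 : hom C s2 t2)
    (u1 : hom C s1 x1) (u2 : hom C s2 x2) (v1 : hom C t1 y1) (v2 : hom C t2 y2)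
    (hs : perp x1 x2) (ht : perp y1 y2) :
  unitary u1 -> unitary u2 -> unitary v1 -> unitary v2 ->
  perp_swap v1 v2 ht ⊚ (f1 ⊗ f2) = (f2 ⊗ f1) ⊚ perp_swap u1 u2 hs.
Proof.
move=> [u1K _] [u2K _] [v1K _] [v2K _].
set g1 := v1 ⊚ f1 ⊚ st u1; set g2 := v2 ⊚ f2 ⊚ st u2.
have through_u : (v1 ⊗ v2) ⊚ (f1 ⊗ f2) = (g1 ⊗ g2) ⊚ (u1 ⊗ u2).
  by rewrite -!tens_comp -!compA u1K u2K !compm1.
have through_v : (st v2 ⊗ st v1) ⊚ (g2 ⊗ g1) = (f2 ⊗ f1) ⊚ (st u2 ⊗ st u1).
  by rewrite -!tens_comp !compA v1K v2K !comp1m.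
rewrite /perp_swap -!compA through_u (compA_eq _ (perp_tens_castm g1 g2 hs ht)).
by rewrite (compA_eq _ through_v).
Qed.

Lemma perp_swap_indep (a b a' b' a'' b'' : O) (u : hom C a a') (v : hom C b b')
    (u' : hom C a a'') (v' : hom C b b'') (h : perp a' b') (h' : perp a'' b'') :
  unitary u -> unitary v -> unitary u' -> unitary v' ->
  perp_swap u v h = perp_swap u' v' h'.
Proof.
move=> Uu Uv Uu' Uv'.
have := perp_swap_natural (I a) (I b) h h' Uu Uv Uu' Uv'.
by rewrite !tens_id comp1m compm1 => ->.
Qed.

Lemma unitary_perp_swap (a b a' b' : O) (u : hom C a a') (v : hom C b b') (h : perp a' b') :
  unitary u -> unitary v -> unitary (perp_swap u v h).
Proof.
move=> Uu Uv; apply: unitary_comp; last exact: unitary_tens.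
by apply: unitary_comp (unitary_castm _); apply: unitary_tens; apply: unitary_star.
Qed.

Lemma star_perp_swap (a b a' b' : O) (u : hom C a a') (v : hom C b b') (h : perp a' b') :
  st (perp_swap u v h) = perp_swap v u (perp_sym h).
Proof.
rewrite /perp_swap !star_comp !star_tens !starK star_castm -!compA.
by rewrite (castm_irr (esym _) (perp_comm (perp_sym h))).
Qed.

Lemma perp_swap_idm (a b : O) (h : perp a b) : perp_swap (I a) (I b) h = castm (perp_comm h).
Proof. by rewrite /perp_swap !star_idm !tens_id comp1m compm1. Qed.

Lemma perp_swap_unit_l (r r' : O) (v : hom C r r') (h : perp (ounit C) r') :
  unitary v -> HomEq (hom C) (perp_swap (I (ounit C)) v h) (I r).
Proof.
move=> [vK _]; apply: (HomEq_castm (e1 := omul1x r) (e2 := omulx1 r)).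
rewrite /perp_swap star_idm tens1x_castm tensx1_castm -!compA !castm_compr castm_comp.
by rewrite !castm_id !comp1m !compm1 vK.
Qed.

Lemma perp_swap_unit_r (r r' : O) (u : hom C r r') (h : perp r' (ounit C)) :
  unitary u -> HomEq (hom C) (perp_swap u (I (ounit C)) h) (I r).
Proof.
move=> [uK _]; apply: (HomEq_castm (e1 := omulx1 r) (e2 := omul1x r)).
rewrite /perp_swap star_idm tens1x_castm tensx1_castm -!compA !castm_compr castm_comp.
by rewrite !castm_id !comp1m !compm1 uK.
Qed.

Lemma perp_swap_hexagon (s r t s' r' t' : O)
    (us : hom C s s') (ur : hom C r r') (w : hom C t t')
    (h : perp (omul C s' r') t') (hs : perp s' t') (hr : perp r' t') :
  unitary us -> unitary ur -> unitary w ->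
  HomEq (hom C) (perp_swap (us ⊗ ur) w h)
    ((perp_swap us w hs ⊗ I r) ⊚ (assocU s t r ⊚ (I s ⊗ perp_swap ur w hr))).
Proof.
move=> [usK usK'] [urK urK'] [wK wK'].
have swap_s : perp_swap us w hs ⊗ I r =
    ((st w ⊗ st us) ⊗ st ur) ⊚ (castm (perp_comm hs) ⊗ I r') ⊚ ((us ⊗ w) ⊗ ur).
  by rewrite /perp_swap -!tens_comp compm1 urK.
have swap_r : I s ⊗ perp_swap ur w hr =
    (st us ⊗ (st w ⊗ st ur)) ⊚ (I s' ⊗ castm (perp_comm hr)) ⊚ (us ⊗ (ur ⊗ w)).
  by rewrite /perp_swap -!tens_comp compm1 usK.
have middle x (T : hom C x _) :
    ((us ⊗ w) ⊗ ur) ⊚ (castm (omulA s t r) ⊚ ((st us ⊗ (st w ⊗ st ur)) ⊚ T)) =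
    castm (omulA s' t' r') ⊚ T.
  rewrite tensA_castm -!compA castm_compr castm_id comp1m; congr (_ ⊚ _).
  by rewrite compA -!tens_comp usK' wK' urK' !tens_id comp1m.
apply: (HomEq_castm (e1 := esym (omulA s r t)) (e2 := omulA t s r)).
rewrite assocU_castm swap_s swap_r -!compA middle tens_castm_idm tens_idm_castm.
rewrite [in LHS]tensA_castm_r [in LHS]tensA_castm /perp_swap star_tens -!compA !castm_compr.
by rewrite (castm_irr (esym (esym _)) (omulA s r t)) (castm_irr _ (perp_comm h)).
Qed.

Lemma perp_swap_unique (eps : forall a b, hom C (omul C a b) (omul C b a)) :
    (forall s1 s2 t1 t2 (f1 : hom C s1 t1) (f2 : hom C s2 t2),
       eps t1 t2 ⊚ (f1 ⊗ f2) = (f2 ⊗ f1) ⊚ eps s1 s2) ->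
    (forall r1 r2, perp r1 r2 -> HomEq (hom C) (eps r1 r2) (I (omul C r1 r2))) ->
  forall (a b a' b' : O) (u : hom C a a') (v : hom C b b') (h : perp a' b'),
    unitary u -> unitary v -> eps a b = perp_swap u v h.
Proof.
move=> eps_natural eps_perp a b a' b' u v h [uK _] [vK _].
have eps_castm : eps a' b' = castm (perp_comm h).
  rewrite (HomEqE erefl (perp_comm h) (HomEq_sym (eps_perp _ _ h))).
  by rewrite castm_id !compm1.
rewrite /perp_swap -eps_castm -compA eps_natural compA -tens_comp vK uK.
by rewrite tens_id comp1m.
Qed.

End PerpSwap.

Section Representatives.
Variables (R : realType) (C : MonCstarCat R) (P : Ob C -> Prop).
Hypothesis P_equiv : equivalent_to_C P.

Definition rep (a : Ob C) : {b : Ob C & {u : hom C a b | P b /\ unitary u}} :=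
  let (b, ex_u) := cid (P_equiv a) in existT _ b (cid ex_u).

Definition rep_ob (a : Ob C) : Ob C := projT1 (rep a).

Definition rep_hom (a : Ob C) : hom C a (rep_ob a) := sval (projT2 (rep a)).

Lemma rep_obP (a : Ob C) : P (rep_ob a).
Proof. exact: (svalP (projT2 (rep a))).1. Qed.

Lemma unitary_rep_hom (a : Ob C) : unitary (rep_hom a).
Proof. exact: (svalP (projT2 (rep a))).2. Qed.

End Representatives.

Section Symmetry.
Variables (R : realType) (C : MonCstarCat R) (perp : Ob C -> Ob C -> Prop).
Local Notation O := (Ob C).
Local Notation I := (idm C).
Hypothesis perp_sym : forall a b, perp a b -> perp b a.
Hypothesis perp_comm : forall r1 r2, perp r1 r2 -> omul C r1 r2 = omul C r2 r1.
Hypothesis perp_tens : forall s1 s2 t1 t2 (f1 : hom C s1 t1) (f2 : hom C s2 t2),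
  perp s1 s2 -> perp t1 t2 -> HomEq (hom C) (tens C f1 f2) (tens C f2 f1).
Variables P1 P2 : O -> Prop.
Hypotheses (P1_monoidal : full_monoidal_sub P1) (P1_equiv : equivalent_to_C P1).
Hypotheses (P2_monoidal : full_monoidal_sub P2) (P2_equiv : equivalent_to_C P2).
Hypothesis P12_perp : forall r1 r2, P1 r1 -> P2 r2 -> perp r1 r2.
Local Notation swap := (perp_swap perp_comm).
Local Notation u1 := (rep_hom P1_equiv).
Local Notation u2 := (rep_hom P2_equiv).
Local Notation U1 := (unitary_rep_hom P1_equiv).
Local Notation U2 := (unitary_rep_hom P2_equiv).

Definition rep_swap (a b : O) : hom C (omul C a b) (omul C b a) :=
  swap (u1 a) (u2 b) (P12_perp (rep_obP P1_equiv a) (rep_obP P2_equiv b)).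

Lemma rep_swapE (a b a' b' : O) (u : hom C a a') (v : hom C b b') (h : perp a' b') :
  unitary u -> unitary v -> rep_swap a b = swap u v h.
Proof. exact: perp_swap_indep (U1 a) (U2 b). Qed.

Lemma rep_swap_perp (r1 r2 : O) (h : perp r1 r2) :
  HomEq (hom C) (rep_swap r1 r2) (I (omul C r1 r2)).
Proof.
rewrite (rep_swapE h (unitary_idm _) (unitary_idm _)) perp_swap_idm.
apply: (HomEq_castm (e1 := erefl) (e2 := esym (perp_comm h))).
by rewrite castm_comp !castm_id compm1.
Qed.

Lemma rep_swap_symmetry : is_symmetry rep_swap.
Proof.
split; [|split; [|split; [|split; [|split]]]].
- by move=> a b; apply: unitary_perp_swap (U1 a) (U2 b).
- move=> a b; rewrite star_perp_swap; exact: perp_swap_indep (U2 b) (U1 a) (U1 b) (U2 a).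
- move=> r; rewrite (rep_swapE (P12_perp P1_monoidal.1 (rep_obP P2_equiv r)) (unitary_idm _) (U2 r)).
  exact: perp_swap_unit_l (U2 r).
- move=> r; rewrite (rep_swapE (P12_perp (rep_obP P1_equiv r) P2_monoidal.1) (U1 r) (unitary_idm _)).
  exact: perp_swap_unit_r (U1 r).
- move=> s r t.
  have h := P12_perp (P1_monoidal.2 _ _ (rep_obP P1_equiv s) (rep_obP P1_equiv r)) (rep_obP P2_equiv t).
  rewrite (rep_swapE h (unitary_tens (U1 s) (U1 r)) (U2 t)).
  exact: perp_swap_hexagon (U1 s) (U1 r) (U2 t).
- move=> s1 s2 t1 t2 f1 f2; exact: perp_swap_natural (U1 s1) (U2 s2) (U1 t1) (U2 t2).
Qed.

Lemma rep_swap_unique (eps : forall a b, hom C (omul C a b) (omul C b a)) :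
    is_symmetry eps ->
    (forall r1 r2, perp r1 r2 -> HomEq (hom C) (eps r1 r2) (I (omul C r1 r2))) ->
  forall a b, eps a b = rep_swap a b.
Proof. by move=> [_ [_ [_ [_ [_ eps_natural]]]]] eps_perp a b; exact: perp_swap_unique (U1 a) (U2 b). Qed.

End Symmetry.

Theorem lemmaA2 (R : realType) (C : MonCstarCat R) (perp : Ob C -> Ob C -> Prop)
  (perp_sym : forall a b, perp a b -> perp b a)
  (perp_comm : forall r1 r2, perp r1 r2 -> omul C r1 r2 = omul C r2 r1)
  (perp_tens : forall s1 s2 t1 t2 (f1 : hom C s1 t1) (f2 : hom C s2 t2),
      perp s1 s2 -> perp t1 t2 -> HomEq (hom C) (tens C f1 f2) (tens C f2 f1))
  (perp_subcats : exists P1 P2 : Ob C -> Prop,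
      full_monoidal_sub P1 /\ equivalent_to_C P1 /\
      full_monoidal_sub P2 /\ equivalent_to_C P2 /\
      (forall r1 r2, P1 r1 -> P2 r2 -> perp r1 r2)) :
  exists eps : forall a b, hom C (omul C a b) (omul C b a),
    is_symmetry eps /\
    (forall r1 r2, perp r1 r2 -> HomEq (hom C) (eps r1 r2) (idm C (omul C r1 r2))) /\
    (forall eps' : forall a b, hom C (omul C a b) (omul C b a),
        is_symmetry eps' ->
        (forall r1 r2, perp r1 r2 -> HomEq (hom C) (eps' r1 r2) (idm C (omul C r1 r2))) ->
        forall a b, eps' a b = eps a b).
Proof.
case: perp_subcats => [P1 [P2 [P1_monoidal [P1_equiv [P2_monoidal [P2_equiv P12_perp]]]]]].
exists (rep_swap perp_comm P1_equiv P2_equiv P12_perp); split; [|split].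
- exact (rep_swap_symmetry perp_sym perp_comm perp_tens
    P1_monoidal P1_equiv P2_monoidal P2_equiv P12_perp).
- exact (rep_swap_perp perp_comm perp_tens P1_equiv P2_equiv P12_perp).
- exact (rep_swap_unique perp_comm P1_equiv P2_equiv P12_perp).
Qed.
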